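(* Let $1<\beta<\beta_*$, where $\beta_*\approx1.4656$ is the real root of $x^3-x^2-1=0$. Then $\mathbb P(D)=1$.
   Context: $\vec q_0=(0,0)$, $\vec q_1=(1,0)$, $\vec q_2=(0,1)$. Subsets of the plane (of the triangle with vertices $(0,0)$, $(\frac1{\beta-1},0)$, $(0,\frac1{\beta-1})$): $C_{01}=\{x\ge\frac1\beta,\ 0\le y<\frac1\beta,\ x+y\le\frac{1}{\beta(\beta-1)}\}$; $C_{12}=\{x\ge\frac1\beta,\ y\ge\frac1\beta,\ \frac{1}{\beta(\beta-1)}<x+y\le\frac{1}{\beta-1}\}$; $C_{02}=\{0\le x<\frac1\beta,\ y\ge\frac1\beta,\ x+y\le\frac{1}{\beta(\beta-1)}\}$; $C_{012}=\{x\ge\frac1\beta,\ y\ge\frac1\beta,\ x+y\le\frac{1}{\beta(\beta-1)}\}$; $C=C_{01}\cup C_{12}\cup C_{02}$. $\Upsilon=\{0,1,2\}^{\mathbb N}$ with its product $\sigma$-algebra and $\mathbb P$ the uniform product (Bernoulli $(1/3,1/3,1/3)$) measure. $D$ is the set of $(b_1,b_2,\ldots)\in\Upsilon$ such that $\sum_{i\ge1}\vec q_{b_{j+i-1}}\beta^{-i}\in C$ for infinitely many $j$ and $\sum_{i\ge1}\vec q_{b_{j+i-1}}\beta^{-i}\in C_{012}$ for infinitely many $j$. *)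

From HB Require Import structures.
From mathcomp Require Import all_boot all_order all_algebra.
From mathcomp Require Import all_classical all_reals all_analysis.
Set Implicit Arguments. Unset Strict Implicit. Unset Printing Implicit Defensive.
Import Order.TTheory GRing.Theory Num.Theory.
Local Open Scope classical_set_scope.
Local Open Scope ring_scope.

(* Upsilon = {0,1,2}^N.  A sequence (b_1,b_2,...) is represented by
   b : nat -> 'I_3 with b k = b_{k+1} (0-based indexing). *)
Definition seq3 := nat -> 'I_3.
HB.instance Definition _ := Choice.copy seq3 (nat -> 'I_3).
HB.instance Definition _ := isPointed.Build seq3 (fun _ => ord0).

Definition cyl (n : nat) (w : seq3) : set seq3 :=
  [set b | forall i, (i < n)%N -> b i = w i].

Definition cylinders : set (set seq3) :=
  [set A | exists n w, A = cyl n w].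

Definition Upsilon := g_sigma_algebraType cylinders.
HB.instance Definition _ := Measurable.copy Upsilon (g_sigma_algebraType cylinders).

(* The uniform Bernoulli (1/3,1/3,1/3) product measure is characterized by
   its values on cylinders. *)
Definition is_uniform_product (R : realType)
  (P : probability Upsilon R) : Prop :=
  forall n (w : seq3), P (cyl n w) = ((3%:R^-1 : R) ^+ n)%:E.

Section Geometry.
Variable R : realType.
Variable beta : R.

(* x- and y-coordinates of  sum_{i>=1} q_{b_{j+i-1}} beta^{-i},
   in 0-based indexing: sum_{i>=0} q_{b (j+i)} beta^{-(i+1)}, with
   q_0=(0,0), q_1=(1,0), q_2=(0,1). *)
Definition xcoord (b : seq3) (j : nat) : R :=
  limn (fun n => \sum_(0 <= i < n) (((nat_of_ord (b (j + i)%N) == 1%N)%:R) / beta ^+ i.+1)).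
Definition ycoord (b : seq3) (j : nat) : R :=
  limn (fun n => \sum_(0 <= i < n) (((nat_of_ord (b (j + i)%N) == 2%N)%:R) / beta ^+ i.+1)).

Definition C01 (x y : R) : Prop :=
  beta^-1 <= x /\ 0 <= y /\ y < beta^-1 /\ x + y <= (beta * (beta - 1))^-1.
Definition C12 (x y : R) : Prop :=
  beta^-1 <= x /\ beta^-1 <= y /\ (beta * (beta - 1))^-1 < x + y /\
  x + y <= (beta - 1)^-1.
Definition C02 (x y : R) : Prop :=
  0 <= x /\ x < beta^-1 /\ beta^-1 <= y /\ x + y <= (beta * (beta - 1))^-1.
Definition C012 (x y : R) : Prop :=
  beta^-1 <= x /\ beta^-1 <= y /\ x + y <= (beta * (beta - 1))^-1.
Definition Cset (x y : R) : Prop := C01 x y \/ C12 x y \/ C02 x y.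

Definition Dset : set Upsilon :=
  [set b | (forall N, exists j, (N <= j)%N /\ Cset (xcoord b j) (ycoord b j)) /\
           (forall N, exists j, (N <= j)%N /\ C012 (xcoord b j) (ycoord b j))].
End Geometry.

(* The point of the plane read off at position j is the beta-expansion with
   digits b_j b_(j+1) ..., and its first k digits determine it up to
   beta^-k / (beta - 1).  Hence, for k large, a block 1 0 0 ... 0 of length k
   starting at j puts the point in C01, and a block 1 2 0 2 0 ... 0 puts it in
   C012: the latter needs 1/beta <= 1/beta^2 + 1/beta^4 and
   1/beta + 1/beta^2 + 1/beta^4 < 1/(beta (beta - 1)), both consequences of
   beta^3 < beta^2 + 1, i.e. of beta < beta_*.  Under the uniform product
   measure a fixed word of length k is missing from M disjoint blocks with
   probability (1 - 3^-k)^M, so almost surely both words occur at infinitely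
   many positions. *)

From HB Require Import structures.
From mathcomp Require Import all_boot all_order all_algebra.
From mathcomp Require Import all_classical all_reals all_analysis.
From mathcomp Require Import measurable_realfun.
From mathcomp Require Import zify ring lra.
Import Order.TTheory GRing.Theory Num.Theory numFieldNormedType.Exports.
Local Open Scope classical_set_scope.
Local Open Scope ring_scope.
Set Implicit Arguments. Unset Strict Implicit.

Section BetaSums.
Variables (R : realType) (beta : R).
Hypothesis beta_gt1 : 1 < beta.

Let beta_gt0 : 0 < beta. Proof. exact: lt_trans beta_gt1. Qed.

Definition bsum (a : nat -> R) n := \sum_(0 <= i < n) a i / beta ^+ i.+1.

Definition tail_bound n := (beta ^+ n)^-1 / (beta - 1).

Lemma bsum0 a : bsum a 0 = 0.
Proof. by rewrite /bsum big_geq. Qed.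

Lemma bsumS a n : bsum a n.+1 = bsum a n + a n / beta ^+ n.+1.
Proof. by rewrite /bsum big_nat_recr. Qed.

Lemma bsumD a1 a2 n : bsum (a1 \+ a2) n = bsum a1 n + bsum a2 n.
Proof. by rewrite /bsum -big_split; apply: eq_bigr => i _; rewrite mulrDl. Qed.

Lemma bsum_stable a n k : (forall i, (n <= i)%N -> a i = 0) -> (n <= k)%N ->
  bsum a k = bsum a n.
Proof.
move=> a0 /subnKC <-; elim: (k - n)%N => [|d IH]; first by rewrite addn0.
by rewrite addnS bsumS a0 ?leq_addr // mul0r addr0.
Qed.

Lemma tail_bound_lt_near e : 0 < e -> \forall k \near \oo, tail_bound k < e.
Proof.
move=> e_gt0; have beta1_gt0 : 0 < beta - 1 by rewrite subr_gt0.
have inv_lt1 : `|beta^-1| < 1 by rewrite gtr0_norm ?invr_gt0 // invf_lt1.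
near=> k; rewrite /tail_bound ltr_pdivrMr // -exprVn.
by near: k; apply: cvgr_lt (cvg_expr inv_lt1) _ _; rewrite mulr_gt0.
Unshelve. all: by end_near.
Qed.

Section UnitDigits.
Variable a : nat -> R.
Hypotheses (a_ge0 : forall i, 0 <= a i) (a_le1 : forall i, a i <= 1).

Lemma bsum_nondecreasing : nondecreasing_seq (bsum a).
Proof.
apply/nondecreasing_seqP => n; rewrite bsumS lerDl.
by rewrite divr_ge0 // exprn_ge0 // ltW.
Qed.

(* Each term [a n / beta^(n+1)] is at most
   [tail_bound n - tail_bound n.+1 = beta^-(n+1)]. *)
Lemma bsum_envelope_nonincreasing : nonincreasing_seq (fun n => bsum a n + tail_bound n).
Proof.
apply/nonincreasing_seqP => n; rewrite bsumS /tail_bound exprS.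
have bn : 0 < beta ^+ n by rewrite exprn_gt0.
have b1 : beta - 1 != 0 by rewrite subr_eq0 gt_eqF.
have -> : (beta ^+ n)^-1 / (beta - 1) =
    (beta * beta ^+ n)^-1 / (beta - 1) + (beta * beta ^+ n)^-1.
  by field; rewrite b1 !gt_eqF.
suff : a n / (beta * beta ^+ n) <= (beta * beta ^+ n)^-1 by lra.
by rewrite -[X in _ <= X]mul1r ler_pM2r ?invr_gt0 ?mulr_gt0.
Qed.

Lemma bsum_le_tail k n : bsum a n <= bsum a k + tail_bound k.
Proof.
have tail_ge0 m : 0 <= tail_bound m.
  by rewrite /tail_bound divr_ge0 ?invr_ge0 ?exprn_ge0 ?subr_ge0 ?ltW.
have [kn|nk] := leqP k n.
  by apply: le_trans (bsum_envelope_nonincreasing kn); rewrite lerDl.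
by apply: le_trans (bsum_nondecreasing (ltnW nk)) _; rewrite lerDl.
Qed.

Lemma is_cvg_bsum : cvgn (bsum a).
Proof.
apply: nondecreasing_is_cvgn; first exact: bsum_nondecreasing.
by exists (bsum a 0 + tail_bound 0) => _ [n _ <-]; exact: bsum_le_tail.
Qed.

Lemma bsum_le_lim k : bsum a k <= limn (bsum a).
Proof. exact: nondecreasing_cvgn_le bsum_nondecreasing is_cvg_bsum k. Qed.

Lemma lim_bsum_le k : limn (bsum a) <= bsum a k + tail_bound k.
Proof.
by apply: limr_le is_cvg_bsum _; near=> n; exact: bsum_le_tail.
Unshelve. all: by end_near.
Qed.

End UnitDigits.
End BetaSums.

Lemma cubic_lt_of_lt_root (R : realType) (beta beta_star : R) :
  beta_star ^+ 3 - beta_star ^+ 2 - 1 = 0 -> 1 < beta -> beta < beta_star ->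
  beta ^+ 3 < beta ^+ 2 + 1.
Proof.
move=> root beta_gt1 lt_root.
have increment : beta_star ^+ 3 - beta_star ^+ 2 - (beta ^+ 3 - beta ^+ 2) =
  (beta_star - beta) * (beta_star * (beta_star - 1) + beta * (beta_star - 1) +
                        beta * (beta - 1) + beta) by ring.
suff : 0 < (beta_star - beta) * (beta_star * (beta_star - 1) +
         beta * (beta_star - 1) + beta * (beta - 1) + beta) by lra.
rewrite mulr_gt0 ?subr_gt0 // !addr_gt0 ?mulr_gt0 ?subr_gt0 //; try lra.
all: exact: lt_trans beta_gt1 lt_root.
Qed.

Section SmallBeta.
Variables (R : realType) (beta : R).
Hypotheses (beta_gt1 : 1 < beta) (cubic_lt : beta ^+ 3 < beta ^+ 2 + 1).

Let beta_gt0 : 0 < beta. Proof. exact: lt_trans beta_gt1. Qed.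

Lemma inv_le_inv2D4 : beta^-1 <= beta^-2 + beta^-4.
Proof.
have num_ge0 : 0 <= beta ^+ 2 + 1 - beta ^+ 3 by rewrite subr_ge0 ltW.
rewrite -subr_ge0.
have -> : beta^-2 + beta^-4 - beta^-1 = (beta ^+ 2 + 1 - beta ^+ 3) / beta ^+ 4.
  by field; rewrite gt_eqF.
by rewrite divr_ge0 // exprn_ge0 // ltW.
Qed.

Lemma inv_inv2D4_lt : beta^-1 + (beta^-2 + beta^-4) < (beta * (beta - 1))^-1.
Proof.
have beta1_neq0 : beta - 1 != 0 by rewrite subr_eq0 gt_eqF.
rewrite -subr_gt0.
have -> : (beta * (beta - 1))^-1 - (beta^-1 + (beta^-2 + beta^-4)) =
    (- beta ^+ 4 + beta ^+ 3 + beta ^+ 2 - beta + 1) / (beta ^+ 4 * (beta - 1)).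
  by field; rewrite beta1_neq0 gt_eqF.
rewrite divr_gt0 ?mulr_gt0 ?exprn_gt0 ?subr_gt0 //.
have quartic_lt : beta ^+ 4 < beta ^+ 3 + beta.
  have -> : beta ^+ 4 = beta * beta ^+ 3 by rewrite exprS.
  have -> : beta ^+ 3 + beta = beta * (beta ^+ 2 + 1) by rewrite mulrDr mulr1 -exprS.
  by rewrite ltr_pM2l.
have : 0 < (beta - 1) ^+ 2 by rewrite exprn_gt0 // subr_gt0.
rewrite sqrrB1 expr2; lra.
Qed.

Lemma exists_block_length : exists k, [/\ (4 <= k)%N, tail_bound beta k < beta^-1 &
  beta^-1 + (beta^-2 + beta^-4) + tail_bound beta k <= (beta * (beta - 1))^-1].
Proof.
have gap_gt0 := inv_inv2D4_lt; rewrite -subr_gt0 in gap_gt0.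
have : \forall k \near \oo, [/\ (4 <= k)%N, tail_bound beta k < beta^-1 &
    tail_bound beta k < (beta * (beta - 1))^-1 - (beta^-1 + (beta^-2 + beta^-4))].
  near=> k; split.
  - by near: k; exists 4%N.
  - by near: k; apply: tail_bound_lt_near; rewrite ?invr_gt0.
  - by near: k; exact: tail_bound_lt_near.
case=> k _ /(_ k (leqnn k)) [k_ge4 small fit]; exists k; split => //; lra.
Unshelve. all: by end_near.
Qed.

End SmallBeta.

Definition block j L (w : seq3) : set seq3 :=
  [set b | forall i, (i < L)%N -> b (j + i)%N = w i].

Definition word (s : seq nat) : seq3 := fun i => inord (nth 0 s i).

Definition digit {R : realType} (c : nat) (b : seq3) j : nat -> R :=
  fun i => ((b (j + i)%N : nat) == c)%:R.

Lemma digit_ge0 {R : realType} c b j i : 0 <= digit (R := R) c b j i.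
Proof. exact: ler0n. Qed.

Lemma digit_le1 {R : realType} c b j i : digit (R := R) c b j i <= 1.
Proof. by rewrite /digit lern1 leq_b1. Qed.

Lemma digit12_le1 {R : realType} b j i : digit (R := R) 1 b j i + digit 2 b j i <= 1.
Proof. by rewrite /digit; case: (b (j + i)%N) => [[|[|[|]]] ?]; rewrite ?addr0 ?add0r. Qed.

Section Coordinates.
Variables (R : realType) (beta : R).
Hypothesis beta_gt1 : 1 < beta.

Lemma xcoordE b j : xcoord beta b j = limn (bsum beta (digit 1 b j)).
Proof. by []. Qed.

Lemma ycoordE b j : ycoord beta b j = limn (bsum beta (digit 2 b j)).
Proof. by []. Qed.

Lemma coord_bounds b j k :
  [/\ bsum beta (digit 1 b j) k <= xcoord beta b j,
      bsum beta (digit 2 b j) k <= ycoord beta b j &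
      xcoord beta b j + ycoord beta b j <=
        bsum beta (digit 1 b j) k + bsum beta (digit 2 b j) k + tail_bound beta k].
Proof.
have cvg_bsum c := is_cvg_bsum beta_gt1 (digit_ge0 c b j) (digit_le1 c b j).
split; rewrite ?xcoordE ?ycoordE.
- exact (bsum_le_lim beta_gt1 (digit_ge0 1 b j) (digit_le1 1 b j) k).
- exact (bsum_le_lim beta_gt1 (digit_ge0 2 b j) (digit_le1 2 b j) k).
rewrite -limD //.
have -> : bsum beta (digit 1 b j) + bsum beta (digit 2 b j) =
    bsum beta (digit 1 b j \+ digit 2 b j) by apply/funext => n; rewrite /= bsumD.
rewrite -bsumD; apply: lim_bsum_le => // i; first by rewrite addr_ge0 ?digit_ge0.
exact: digit12_le1.
Qed.

Lemma bsum_digit_block c b j k w : block j k w b ->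
  bsum beta (digit c b j) k = bsum beta (digit c w 0) k.
Proof. by move=> bw; apply: eq_big_nat => i /andP[_ ik]; rewrite /digit bw. Qed.

Lemma bsum_digit_word c s k : (0 < c)%N -> (size s <= k)%N ->
  bsum beta (digit c (word s) 0) k = bsum beta (digit c (word s) 0) (size s).
Proof.
move=> c_gt0; apply: bsum_stable => i si.
by rewrite /digit /word nth_default // inordK // eq_sym eqn0Ngt c_gt0.
Qed.

Lemma C01_block b j k : (0 < k)%N -> block j k (word [:: 1]) b ->
  tail_bound beta k < beta^-1 -> beta^-1 + tail_bound beta k <= (beta * (beta - 1))^-1 ->
  C01 beta (xcoord beta b j) (ycoord beta b j).
Proof.
move=> k_gt0 bw small fit; have [] := coord_bounds b j k.
have [] := coord_bounds b j 0; rewrite !bsum0 => _ y_ge0 _.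
rewrite !(bsum_digit_block _ bw) !bsum_digit_word //=.
rewrite !bsumS !bsum0 /digit /word /= !inordK //= !add0r mul0r mul1r expr1.
by rewrite /C01; lra.
Qed.

Lemma C012_block b j k : (4 <= k)%N -> block j k (word [:: 1; 2; 0; 2]) b ->
  beta^-1 <= beta^-2 + beta^-4 ->
  beta^-1 + (beta^-2 + beta^-4) + tail_bound beta k <= (beta * (beta - 1))^-1 ->
  C012 beta (xcoord beta b j) (ycoord beta b j).
Proof.
move=> k_ge4 bw y_large fit; have [] := coord_bounds b j k.
rewrite !(bsum_digit_block _ bw) !bsum_digit_word //=.
rewrite !bsumS !bsum0 /digit /word /= !inordK //= !add0r !mul0r !mul1r !addr0 !add0r expr1.
by rewrite /C012; lra.
Qed.

End Coordinates.

Section MeasurableEvents.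
Context d (T : measurableType d) (R : realType).

Lemma measurable_ler_set (f g : T -> R) :
  measurable_fun setT f -> measurable_fun setT g -> measurable [set t | f t <= g t].
Proof.
move=> mf mg; rewrite -[X in measurable X]setTI.
exact: (measurable_fun_ler mf mg measurableT (I : measurable [set true])).
Qed.

Lemma measurable_ltr_set (f g : T -> R) :
  measurable_fun setT f -> measurable_fun setT g -> measurable [set t | f t < g t].
Proof.
move=> mf mg; rewrite -[X in measurable X]setTI.
exact: (measurable_fun_ltr mf mg measurableT (I : measurable [set true])).
Qed.

Lemma measurable_infinitely_often (E : nat -> set T) : (forall j, measurable (E j)) ->
  measurable [set t | forall N, exists j, (N <= j)%N /\ E j t].
Proof.
move=> mE; have -> : [set t | forall N, exists j, (N <= j)%N /\ E j t] =
    \bigcap_N \bigcup_(j in [set j | (N <= j)%N]) E j.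
  apply/seteqP; split => t /= io N; first by move=> _; have [j [Nj Ej]] := io N; exists j.
  by have [j Nj Ej] := io N I; exists j.
by apply: bigcapT_measurable => N; exact: bigcup_measurable.
Qed.

Lemma probability_negligibleC (P : probability T R) (A : set T) : measurable A ->
  P.-negligible (~` A) -> P A = 1%E.
Proof.
move=> mA /(negligibleP _ (measurableC mA)) nullC.
rewrite -[A]setCK (probability_setC _ (measurableC mA)).
by have -> : P (~` A) = 0%E := nullC; rewrite sube0.
Qed.

End MeasurableEvents.

Definition prefix_determined p (S : set seq3) :=
  forall b b', (forall i, (i < p)%N -> b i = b' i) -> S b -> S b'.

Definition padded p (t : {ffun 'I_p -> 'I_3}) : seq3 :=
  fun i => odflt ord0 (omap t (insub i)).

Definition glue p (t : {ffun 'I_p -> 'I_3}) (u : seq3) : seq3 :=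
  fun i => if (i < p)%N then padded t i else u (i - p)%N.

Lemma paddedE p (t : {ffun 'I_p -> 'I_3}) i (ip : (i < p)%N) :
  padded t i = t (Ordinal ip).
Proof. by rewrite /padded insubT. Qed.

Lemma padded_inj p (t t' : {ffun 'I_p -> 'I_3}) :
  (forall i, (i < p)%N -> padded t i = padded t' i) -> t = t'.
Proof.
move=> tt'; apply/ffunP => -[i ip].
by rewrite -(paddedE t ip) -(paddedE t' ip) tt'.
Qed.

Lemma cyl_measurable n w : measurable (cyl n w : set Upsilon).
Proof. by apply: sub_sigma_algebra; exists n, w. Qed.

Lemma prefix_determined_cyl p S : prefix_determined p S ->
  S = \bigcup_(t in [set t : {ffun 'I_p -> 'I_3} | S (padded t)]) cyl p (padded t).
Proof.
move=> dS; apply/seteqP; split => [b Sb|b [t /= St tb]].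
  have pref i (ip : (i < p)%N) : padded [ffun i : 'I_p => b (val i)] i = b i.
    by rewrite paddedE ffunE.
  exists [ffun i : 'I_p => b (val i)] => /= [|i ip]; last by rewrite pref.
  by apply: (dS b) => // i ip; rewrite pref.
by apply: dS St => i ip; rewrite tb.
Qed.

Lemma trivIset_cylI p (D : set {ffun 'I_p -> 'I_3}) (B : set seq3) :
  trivIset D (fun t => cyl p (padded t) `&` B).
Proof.
move=> t t' _ _ [b [/= [tb _] [t'b _]]]; apply: padded_inj => i ip.
by rewrite -tb // t'b.
Qed.

Lemma prefix_determined_measurable p S : prefix_determined p S ->
  measurable (S : set Upsilon).
Proof.
move=> dS; rewrite (prefix_determined_cyl dS).
by apply: fin_bigcup_measurable => // t _; exact: cyl_measurable.
Qed.

Lemma block_prefix_determined j L w : prefix_determined (j + L) (block j L w).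
Proof. by move=> b b' bb' bw i iL; rewrite -bb' ?bw // ltn_add2l. Qed.

Lemma cylI_block p (t : {ffun 'I_p -> 'I_3}) L u :
  cyl p (padded t) `&` block p L u = cyl (p + L) (glue t u).
Proof.
apply/seteqP; split => b /= => [[tb ub] i iL|tub].
  rewrite /glue; case: ltnP => ip; first exact: tb.
  by rewrite -(subnKC ip) ub ?addKn // -(ltn_add2l p) subnKC.
split => i ip; first by rewrite tub ?/glue ?ip // ltn_addr.
by rewrite tub ?/glue ?ltn_add2l // ltnNge leq_addr addKn.
Qed.

Definition occurs_io L (w : seq3) : set seq3 :=
  [set b | forall N, exists2 j, (N <= j)%N & block j L w b].

Definition avoid (w : seq3) L N M : set seq3 :=
  [set b | forall m, (m < M)%N -> ~ block (N + m * L) L w b].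

Lemma avoid_prefix_determined w L N M : prefix_determined (N + M * L) (avoid w L N M).
Proof.
move=> b b' bb' Ab m mM bw; apply: (Ab m mM) => i iL; rewrite bb' ?bw //.
have : (m.+1 * L <= M * L)%N by rewrite leq_mul2r mM orbT.
rewrite mulSn; lia.
Qed.

Lemma avoidS w L N M : avoid w L N M.+1 = avoid w L N M `\` block (N + M * L) L w.
Proof.
apply/seteqP; split => b /= => [Ab|[Ab Bb] m].
  by split => [m mM|]; apply: Ab; rewrite ltnS // ltnW.
by rewrite ltnS leq_eqVlt => /orP[/eqP ->|]; [exact: Bb | exact: Ab].
Qed.

Section UniformProduct.
Variables (R : realType) (P : probability Upsilon R).
Hypothesis HP : is_uniform_product P.

Lemma measure_prefix_determinedI p S (B : set Upsilon) :
  prefix_determined p S -> measurable B ->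
  P (S `&` B) = (\sum_(t \in [set t : {ffun 'I_p -> 'I_3} | S (padded t)])
                   P (cyl p (padded t) `&` B))%E.
Proof.
move=> dS mB; rewrite {1}(prefix_determined_cyl dS) setI_bigcupl measure_fin_bigcup //.
- exact: finite_finset.
- exact: trivIset_cylI.
- by move=> t _; apply: measurableI => //; exact: cyl_measurable.
Qed.

Lemma measureI_block p S L u : prefix_determined p S ->
  P (S `&` block p L u) = (P S * ((3%:R^-1 : R) ^+ L)%:E)%E.
Proof.
move=> dS.
have mB := prefix_determined_measurable (@block_prefix_determined p L u).
rewrite (measure_prefix_determinedI dS mB) -[S in P S]setIT.
rewrite (measure_prefix_determinedI dS measurableT).
under eq_fsbigr do rewrite cylI_block HP.
under [X in (_ = X * _)%E]eq_fsbigr do rewrite setIT HP.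
rewrite !fsbig_finite //= !sumEFin -EFinM big_distrl /=.
by congr (_ %:E); apply: eq_bigr => t _; rewrite exprD.
Qed.

Lemma measure_avoid w L N M :
  P (avoid w L N M) = ((1 - (3%:R^-1 : R) ^+ L) ^+ M)%:E.
Proof.
elim: M => [|M IH].
  by rewrite expr0 -(probability_setT P); congr (P _); apply/seteqP; split.
have dA := @avoid_prefix_determined w L N M.
have mA := prefix_determined_measurable dA.
have mB := prefix_determined_measurable (@block_prefix_determined (N + M * L) L w).
have -> : P (avoid w L N M.+1) =
    (P (avoid w L N M) - P (avoid w L N M `&` block (N + M * L) L w))%E.
  by rewrite avoidS measureD // (le_lt_trans (probability_le1 P mA)) ?ltey.
by rewrite measureI_block // IH -EFinM -EFinB exprS; congr (_%:E); ring.
Qed.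

Lemma measure_bigcap_avoid w L N : (0 < L)%N -> P (\bigcap_M avoid w L N M) = 0%E.
Proof.
move=> L_gt0; set q : R := 1 - (3%:R^-1 : R) ^+ L.
have q_ge0 : 0 <= q by rewrite subr_ge0 exprn_ile1 // invf_le1 ?ler1n.
have q_lt1 : `|q| < 1.
  by rewrite ger0_norm // ltrBlDr ltrDl exprn_gt0 // invr_gt0.
have mA M := prefix_determined_measurable (@avoid_prefix_determined w L N M).
have mZ : measurable (\bigcap_M avoid w L N M : set Upsilon) by exact: bigcapT_measurable.
have le_q n : (P (\bigcap_M avoid w L N M) <= (q ^+ n)%:E)%E.
  by rewrite -(measure_avoid w L N) le_measure ?inE // => b; apply.
have /fineK <- : P (\bigcap_M avoid w L N M) \is a fin_num by rewrite fin_num_measure.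
congr (_ %:E); apply/eqP; rewrite eq_le fine_ge0 ?measure_ge0 // andbT.
rewrite -(cvg_lim _ (cvg_expr q_lt1)) //; apply: limr_ge; first exact: cvgP (cvg_expr q_lt1).
by near=> M; rewrite -lee_fin fineK ?fin_num_measure.
Unshelve. all: by end_near.
Qed.

Lemma negligible_not_occurs_io w L : (0 < L)%N ->
  P.-negligible (~` occurs_io L w).
Proof.
move=> L_gt0.
apply: (@negligibleS _ _ _ _ (\bigcup_N \bigcap_M avoid w L N M : set Upsilon)).
  move=> b /= /existsNP[N never]; exists N => // M _ m _ bw.
  by apply: never; exists (N + m * L)%N; rewrite ?leq_addr.
apply: negligible_bigcup => N; apply/negligibleP; last exact: measure_bigcap_avoid.
apply: bigcapT_measurable => M.
exact: prefix_determined_measurable (@avoid_prefix_determined w L N M).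
Qed.

End UniformProduct.

Lemma prefix_determined_fun_measurable (R : realType) p (f : seq3 -> R) :
  (forall b b', (forall i, (i < p)%N -> b i = b' i) -> f b = f b') ->
  measurable_fun setT (f : Upsilon -> R).
Proof.
move=> fp _ Y _; rewrite setTI; apply: (@prefix_determined_measurable p) => b b' bb' /=.
by rewrite (fp b b' bb').
Qed.

Section DsetMeasurable.
Variables (R : realType) (beta : R).
Hypothesis beta_gt1 : 1 < beta.

Lemma coord_measurable c j :
  measurable_fun setT (fun b : Upsilon => limn (bsum beta (digit c b j))).
Proof.
apply: (@measurable_fun_cvg _ _ _ _ (fun n (b : Upsilon) => bsum beta (digit c b j) n)).
  move=> n; apply: (@prefix_determined_fun_measurable _ (j + n)) => b b' bb'.
  by apply: eq_big_nat => i /andP[_ ilt]; rewrite /digit bb' // ltn_add2l.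
by move=> b _; exact (is_cvg_bsum beta_gt1 (digit_ge0 c b j) (digit_le1 c b j)).
Qed.

Lemma coord_events_measurable j :
  measurable [set b : Upsilon | Cset beta (xcoord beta b j) (ycoord beta b j)] /\
  measurable [set b : Upsilon | C012 beta (xcoord beta b j) (ycoord beta b j)].
Proof.
have mx := coord_measurable 1 j; have my := coord_measurable 2 j.
have mxy := measurable_funD mx my.
split; rewrite /Cset /C01 /C12 /C02 /C012;
  repeat (apply: measurableU || apply: measurableI);
  first [apply: measurable_ler_set | apply: measurable_ltr_set];
  first [exact: measurable_cst | exact: mx | exact: my | exact: mxy].
Qed.

Lemma Dset_measurable : measurable (Dset beta : set Upsilon).
Proof.
by apply: measurableI; apply: measurable_infinitely_often => j;
  have [] := coord_events_measurable j.
Qed.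

End DsetMeasurable.

Lemma occurs_io_subset_Dset (R : realType) (beta : R) k : 1 < beta -> (4 <= k)%N ->
  tail_bound beta k < beta^-1 -> beta^-1 <= beta^-2 + beta^-4 ->
  beta^-1 + (beta^-2 + beta^-4) + tail_bound beta k <= (beta * (beta - 1))^-1 ->
  occurs_io k (word [:: 1]) `&` occurs_io k (word [:: 1; 2; 0; 2]) `<=` Dset beta.
Proof.
move=> beta_gt1 k_ge4 small y_large fit b [io1 io2]; split => N.
  have inv_gt0 : 0 < beta^-1 by rewrite invr_gt0 (lt_trans ltr01).
  have [j Nj bw] := io1 N; exists j; split => //; left.
  by apply: C01_block bw small _ => //; [exact: leq_trans k_ge4 | lra].
have [j Nj bw] := io2 N; exists j; split => //.
exact: C012_block bw y_large fit.
Qed.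

Theorem lemma4p5 (R : realType) (beta beta_star : R)
  (Hstar : beta_star ^+ 3 - beta_star ^+ 2 - 1 = 0)
  (H1 : 1 < beta) (H2 : beta < beta_star)
  (P : probability Upsilon R) (HP : is_uniform_product P) :
  measurable (Dset beta) /\ P (Dset beta) = 1%E.
Proof.
have cubic_lt := cubic_lt_of_lt_root Hstar H1 H2.
have mD := Dset_measurable H1.
split => //; apply: probability_negligibleC => //.
have [k [k_ge4 small fit]] := exists_block_length H1 cubic_lt.
have k_gt0 : (0 < k)%N by exact: leq_trans k_ge4.
have io1 := negligible_not_occurs_io HP (word [:: 1]) k_gt0.
have io2 := negligible_not_occurs_io HP (word [:: 1; 2; 0; 2]) k_gt0.
apply: negligibleS (negligibleU io1 io2); rewrite -setCI; apply: subsetC.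
exact: occurs_io_subset_Dset H1 k_ge4 small (inv_le_inv2D4 H1 cubic_lt) fit.
Qed.
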